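(* Let $q$ be an odd prime power, $z\in\mathbb F_q^\times$, and $A\in\widehat{\mathbb F_q^\times}$ of order larger than $2$. Then $${}_2\mathbb F_1\!\left[\begin{matrix}A&A\phi\\&\phi\end{matrix};z\right]=\frac{1+\phi(z)}2\left(\overline A^2(1+\sqrt z)+\overline A^2(1-\sqrt z)\right),$$ $${}_2\mathbb F_1\!\left[\begin{matrix}A&A\phi\\&A^2\end{matrix};z\right]=\frac{1+\phi(1-z)}2\left(\overline A^2\!\left(\frac{1+\sqrt{1-z}}2\right)+\overline A^2\!\left(\frac{1-\sqrt{1-z}}2\right)\right).$$
   Context: $\mathbb F_q$ is a finite field with $q$ elements, $q$ a power of an odd prime $p$. $\widehat{\mathbb F_q^\times}$ is the group of multiplicative characters $\chi:\mathbb F_q^\times\to\mathbb C^\times$; every character, including the trivial character $\varepsilon$, is extended to $\mathbb F_q$ by $\chi(0)=0$. $\phi$ is the quadratic character, $\overline\chi$ denotes the complex-conjugate (inverse) character, and products/powers of characters are pointwise. Jacobi sum: $J(A,B)=\sum_{x\in\mathbb F_q}A(x)B(1-x)$. Period function: ${}_2\mathbb P_1\!\left[\begin{matrix}A&B\\&C\end{matrix};\lambda\right]=\sum_{y\in\mathbb F_q}B(y)\,\overline BC(1-y)\,\overline A(1-\lambda y)$; normalized function ${}_2\mathbb F_1\!\left[\begin{matrix}A&B\\&C\end{matrix};\lambda\right]=\frac{1}{J(B,C\overline B)}\,{}_2\mathbb P_1\!\left[\begin{matrix}A&B\\&C\end{matrix};\lambda\right]$. For $w\in\mathbb F_q$,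 $\sqrt w$ denotes either square root of $w$ in $\mathbb F_q$ when one exists (the expressions do not depend on the choice); when $w$ is a nonzero non-square the prefactor $(1+\phi(w))/2$ is $0$ and the whole right-hand side is interpreted as $0$. *)

From HB Require Import structures.
From mathcomp Require Import all_boot all_order all_algebra all_field.
Set Implicit Arguments. Unset Strict Implicit. Unset Printing Implicit Defensive.
Import Order.TTheory GRing.Theory Num.Theory.
Local Open Scope ring_scope.

(* Multiplicative characters of F_q^x with values in algC, extended by chi(0)=0,
   represented as functions F -> algC. *)
Definition is_mchar (F : finFieldType) (chi : F -> algC) : Prop :=
  [/\ chi 0 = 0, chi 1 = 1 & forall x y : F, chi (x * y) = chi x * chi y].

Definition eps (F : finFieldType) : F -> algC := fun x => if x == 0 then 0 else 1.

Definition qchar (F : finFieldType) : F -> algC :=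
  fun x => if x == 0 then 0 else if [exists y : F, y ^+ 2 == x] then 1 else -1.

Definition cmul (F : finFieldType) (A B : F -> algC) : F -> algC := fun x => A x * B x.
Definition cconj (F : finFieldType) (A : F -> algC) : F -> algC := fun x => (A x)^*.
Definition cexp (F : finFieldType) (A : F -> algC) (n : nat) : F -> algC :=
  fun x => A x ^+ n.

Definition jacobi (F : finFieldType) (A B : F -> algC) : algC :=
  \sum_(x : F) A x * B (1 - x).

Definition P21 (F : finFieldType) (A B C : F -> algC) (lam : F) : algC :=
  \sum_(y : F) B y * cmul (cconj B) C (1 - y) * cconj A (1 - lam * y).

Definition F21 (F : finFieldType) (A B C : F -> algC) (lam : F) : algC :=
  P21 A B C lam / jacobi B (cmul C (cconj B)).

(* a chosen square root in F (0 if none exists; only used where the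
   prefactor (1+phi(w))/2 vanishes otherwise) *)
Definition sqrtF (F : finFieldType) (w : F) : F :=
  odflt 0 [pick s : F | s ^+ 2 == w].

Arguments eps F : clear implicits.
Arguments qchar F : clear implicits.

From HB Require Import structures.
From mathcomp Require Import all_boot all_order all_algebra all_field.
From mathcomp Require Import cyclic.
From mathcomp Require Import ring.
From Stdlib Require Import FunctionalExtensionality.
Import GRing.Theory Num.Theory.
Local Open Scope ring_scope.

(* Pulled back along y |-> y / ((1 - y) (1 - z y)) (resp. y (1 - y) / (1 - z y)),
   the period sum becomes sum_x A(x) N(x), where N(x) is a sum of quadratic
   characters over the roots y of a quadratic equation.  By the quadratic
   formula, N(x) is a sum of phi(u + v d) over the square roots d of the
   discriminant D; such a sum vanishes when u^2 - v^2 D is a non-square and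
   otherwise equals two values of phi.  Hence N(x) = 0 unless z (resp. 1 - z) is
   a square s^2, and then N(x) = phi(x) (phi(1 + k1^2 x) + phi(1 + k2^2 x)) with
   k1, k2 = 1 +- s (resp. the analogue with 1 - 4 k^2 x, k = (1 +- s)/2).  The
   same fibre decomposition turns sum_w A(w) phi(w) phi(1 + k^2 w) into
   J Abar^2(k) for the normalising Jacobi sum J, and J != 0 because J times its
   conjugate Jacobi sum equals q. *)

Set Implicit Arguments. Unset Strict Implicit.

Section OddFiniteField.

Variable F : finFieldType.
Hypothesis hodd : odd #|F|.

Lemma two_neq0 : (2%:R : F) != 0.
Proof.
apply/negP => /eqP h2.
have hc : 2%N \in [pchar F] by rewrite inE /= h2 eqxx.
move: hodd (finNzRing_gt1 F); rewrite (card_pprimeChar hc).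
by case: (logn _ _) => [|n] //; rewrite oddX.
Qed.

Lemma four_neq0 : (4%:R : F) != 0.
Proof. by rewrite (natrM _ 2 2) mulf_neq0 ?two_neq0. Qed.

Lemma expf_card_pred (x : F) : x != 0 -> x ^+ #|F|.-1 = 1.
Proof.
move=> x0; apply: (mulfI x0).
by rewrite -exprS prednK ?expf_card ?mulr1 // ltnW // finNzRing_gt1.
Qed.

Lemma card_pred_gt0 : (0 < #|F|.-1)%N.
Proof. by rewrite -ltnS prednK ?finNzRing_gt1 // ltnW // finNzRing_gt1. Qed.

Lemma primitive_root_exists : exists w : F, (#|F|.-1).-primitive_root w.
Proof.
pose units := [seq x <- enum F | x != 0].
have /hasP[w _ hw] : has (#|F|.-1).-primitive_root units.
  apply: has_prim_root; first exact: card_pred_gt0.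
  - by apply/allP => x; rewrite mem_filter unity_rootE => /andP[/expf_card_pred -> _].
  - by rewrite filter_uniq // enum_uniq.
  - rewrite size_filter -(cardC1 (0 : F)) cardE /enum_mem size_filter.
    by rewrite (@eq_filter _ _ predT) // filter_predT.
by exists w.
Qed.

Section PrimitiveRoot.

Variable w : F.
Hypothesis hw : (#|F|.-1).-primitive_root w.

Lemma prim_root_neq0 : w != 0.
Proof.
apply: contraPneq (prim_expr_order hw) => ->.
by rewrite expr0n gtn_eqF ?card_pred_gt0 // => /esym/eqP; rewrite oner_eq0.
Qed.

Lemma prim_root_expr_surj (x : F) : x != 0 -> exists k, x = w ^+ k.
Proof. by move=> x0; have [i ->] := prim_rootP hw (expf_card_pred x0); exists i. Qed.

Lemma is_square_prim_expr k : [exists y : F, y ^+ 2 == w ^+ k] = ~~ odd k.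
Proof.
apply/existsP/idP => [[y /eqP hy] | /negPf k_even]; last first.
  by exists (w ^+ k./2); rewrite -exprM -{2}(odd_double_half k) k_even -mul2n mulnC.
have y0 : y != 0.
  apply: contraPneq hy => ->; rewrite expr0n => /esym/eqP.
  by rewrite expf_eq0 (negPf prim_root_neq0) andbF.
have [j hj] := prim_root_expr_surj y0.
have even_n : (2 %| #|F|.-1)%N.
  by move: hodd (finNzRing_gt1 F); rewrite dvdn2; case: #|F| => // n; rewrite /= negbK.
move: hy; rewrite hj -exprM => /eqP; rewrite (eq_prim_root_expr hw) => /eqP.
move/(congr1 (modn^~ 2)); rewrite /= !modn_dvdm // !modn2 oddM andbF.
by case: (odd k).
Qed.

Lemma qchar_prim_expr k : qchar F (w ^+ k) = (-1) ^+ k.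
Proof.
rewrite /qchar expf_eq0 (negPf prim_root_neq0) andbF is_square_prim_expr.
by rewrite -signr_odd; case: (odd k).
Qed.

End PrimitiveRoot.

Lemma qchar0 : qchar F 0 = 0.
Proof. by rewrite /qchar eqxx. Qed.

Lemma qchar1 : qchar F 1 = 1.
Proof. by rewrite /qchar oner_eq0; case: existsP => // [[]]; exists 1; rewrite expr1n. Qed.

Lemma qcharM (x y : F) : qchar F (x * y) = qchar F x * qchar F y.
Proof.
have [-> | x0] := eqVneq x 0; first by rewrite mul0r qchar0 mul0r.
have [-> | y0] := eqVneq y 0; first by rewrite mulr0 qchar0 mulr0.
have [w hw] := primitive_root_exists.
have [k ->] := prim_root_expr_surj hw x0; have [l ->] := prim_root_expr_surj hw y0.
by rewrite -exprD !(qchar_prim_expr hw) exprD.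
Qed.

Lemma qchar_sqr (x : F) : x != 0 -> qchar F x ^+ 2 = 1.
Proof.
have [w hw] := primitive_root_exists => x0.
by have [k ->] := prim_root_expr_surj hw x0; rewrite (qchar_prim_expr hw) sqrr_sign.
Qed.

Lemma qcharX2 (x : F) : x != 0 -> qchar F (x ^+ 2) = 1.
Proof. by move=> x0; rewrite expr2 qcharM -expr2 qchar_sqr. Qed.

Lemma qcharX2M (k x : F) : k != 0 -> qchar F (k ^+ 2 * x) = qchar F x.
Proof. by move=> k0; rewrite qcharM qcharX2 // mul1r. Qed.

Lemma qcharV (x : F) : qchar F x^-1 = qchar F x.
Proof.
have [-> | x0] := eqVneq x 0; first by rewrite invr0.
by rewrite -[qchar F x^-1]mul1r -(qchar_sqr x0) expr2 -mulrA -qcharM mulfV // qchar1 mulr1.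
Qed.

Lemma conj_qchar (x : F) : (qchar F x)^* = qchar F x.
Proof.
by rewrite /qchar; case: (x == 0); last case: [exists _, _]; rewrite ?conjC0 ?conjC1 ?rmorphN1.
Qed.

Lemma qchar_nonsquare (x : F) : (forall y, y ^+ 2 != x) -> qchar F x = -1.
Proof.
move=> hx; rewrite /qchar; case: existsP => [[y /eqP hy] | _].
  by have := hx y; rewrite hy eqxx.
by case: eqP => // x0; have := hx 0; rewrite x0 expr0n eqxx.
Qed.

Lemma qchar_mchar : is_mchar (qchar F).
Proof. by split; [exact: qchar0 | exact: qchar1 | exact: qcharM]. Qed.

End OddFiniteField.

Section MultiplicativeCharacter.

Variables (F : finFieldType) (chi : F -> algC).
Hypothesis hchi : is_mchar chi.

Lemma mchar0 : chi 0 = 0. Proof. by case: hchi. Qed.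
Lemma mchar1 : chi 1 = 1. Proof. by case: hchi. Qed.
Lemma mcharM x y : chi (x * y) = chi x * chi y. Proof. by case: hchi. Qed.

Lemma mcharX x k : chi (x ^+ k) = chi x ^+ k.
Proof. by elim: k => [|k IHk]; rewrite ?expr0 ?mchar1 // !exprS mcharM IHk. Qed.

Lemma mchar_mulV x : x != 0 -> chi x * chi x^-1 = 1.
Proof. by move=> x0; rewrite -mcharM mulfV ?mchar1. Qed.

Lemma mchar_neq0 x : x != 0 -> chi x != 0.
Proof.
move=> x0; apply/eqP => chi0.
by have := mchar_mulV x0; rewrite chi0 mul0r => /eqP; rewrite eq_sym oner_eq0.
Qed.

Lemma mcharV x : chi x^-1 = (chi x)^-1.
Proof.
have [-> | x0] := eqVneq x 0; first by rewrite invr0 mchar0 invr0.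
by apply: (mulfI (mchar_neq0 x0)); rewrite mchar_mulV // mulfV // mchar_neq0.
Qed.

(* The values of chi are roots of unity, so conjugation inverts them. *)
Lemma conj_mchar x : (chi x)^* = chi x^-1.
Proof.
have [-> | x0] := eqVneq x 0; first by rewrite invr0 mchar0 conjC0.
have chi_unity : chi x ^+ #|F|.-1 = 1 by rewrite -mcharX expf_card_pred // mchar1.
have norm1 : `|chi x| = 1.
  by apply/eqP; rewrite -(pexpr_eq1 (card_pred_gt0 F)) // -normrX chi_unity normr1.
apply: (mulfI (mchar_neq0 x0)).
by rewrite mchar_mulV // -normCK norm1 expr1n.
Qed.

Lemma mchar_sum_eq0 a : a != 0 -> chi a != 1 -> \sum_x chi x = 0.
Proof.
move=> a0 chi_a.
have h : \sum_x chi x = chi a * \sum_x chi x.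
  rewrite {1}(reindex_inj (mulfI a0)) mulr_sumr.
  by apply: eq_bigr => x _; rewrite mcharM.
have : (1 - chi a) * \sum_x chi x = 0 by rewrite mulrBl mul1r -h subrr.
by move/eqP; rewrite mulf_eq0 subr_eq0 eq_sym (negPf chi_a) => /eqP.
Qed.

Lemma mchar_invarg : is_mchar (fun x => chi x^-1).
Proof. by split; rewrite ?invr0 ?invr1 ?mchar0 ?mchar1 // => x y; rewrite invfM mcharM. Qed.

End MultiplicativeCharacter.

Lemma cmulC (F : finFieldType) (f g : F -> algC) x : cmul f g x = cmul g f x.
Proof. exact: mulrC. Qed.

Lemma mchar_mul (F : finFieldType) (chi psi : F -> algC) :
  is_mchar chi -> is_mchar psi -> is_mchar (cmul chi psi).
Proof.
move=> hchi hpsi; rewrite /cmul; split; first by rewrite mchar0 ?mul0r.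
  by rewrite !mchar1 ?mulr1.
by move=> x y; rewrite !mcharM //; ring.
Qed.

Lemma sum_fiber (I J : finType) (R : comPzRingType) (G : I -> R) (H : J -> R) (h : I -> J) :
  \sum_y G y * H (h y) = \sum_x H x * \sum_(y | h y == x) G y.
Proof.
rewrite (partition_big h xpredT) //=; apply: eq_bigr => x _.
by rewrite mulr_sumr; apply: eq_bigr => y /eqP <-; rewrite mulrC.
Qed.

Lemma sumr_predC1 (T : finType) (R : zmodType) (b : T) (g : T -> R) :
  \sum_(y | y != b) g y = \sum_y g y - g b.
Proof. by rewrite [X in _ = X - _](bigD1 b) //= addrC addrK. Qed.

Section SquareRoots.

Variable F : finFieldType.

Variant square_spec (D : F) : Prop :=
  | SquareZero of D = 0
  | SquareNonzero e of e != 0 & D = e ^+ 2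
  | NonSquare of forall d : F, d ^+ 2 != D.

Lemma squareP (D : F) : square_spec D.
Proof.
have [-> | D0] := eqVneq D 0; first exact: SquareZero.
have [/existsP[e /eqP De] | hD] := boolP [exists e : F, e ^+ 2 == D]; last first.
  by apply: NonSquare => d; apply: contra hD => hd; apply/existsP; exists d.
apply: (@SquareNonzero D e) => //.
by apply: contra_neq D0 => e0; rewrite -De e0 expr0n.
Qed.

Lemma sqrtF_cases (w : F) : (forall d, d ^+ 2 != w) \/ sqrtF w ^+ 2 = w.
Proof.
rewrite /sqrtF; case: pickP => [s /eqP -> | hw]; [by right | left].
by move=> d; rewrite hw.
Qed.

Variable R : zmodType.

Lemma sum_sqrt0 (g : F -> R) : \sum_(d | d ^+ 2 == 0) g d = g 0.
Proof.
by rewrite (eq_bigl (pred1 0)) ?big_pred1_eq // => d; rewrite sqrf_eq0.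
Qed.

Lemma sum_sqrt_nonsquare (g : F -> R) D :
  (forall d, d ^+ 2 != D) -> \sum_(d | d ^+ 2 == D) g d = 0.
Proof. by move=> hD; rewrite big_pred0 // => d; apply/negbTE/hD. Qed.

Hypothesis hodd : odd #|F|.

Lemma sum_sqrt_sqr (g : F -> R) e :
  e != 0 -> \sum_(d | d ^+ 2 == e ^+ 2) g d = g e + g (- e).
Proof.
move=> e0; have e_neq_opp : e != - e.
  by rewrite -addr_eq0 -mulr2n -mulr_natr mulf_eq0 negb_or e0 two_neq0.
rewrite (bigD1 e) //= (eq_bigl (pred1 (- e))) ?big_pred1_eq // => d.
rewrite eqf_sqr /=; have [-> | de] := eqVneq d e; last by rewrite andbT.
by rewrite (negPf e_neq_opp).
Qed.

Lemma sum_quadratic_roots (f : F -> R) (a b c : F) : a != 0 ->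
  \sum_(y | a * y ^+ 2 + b * y + c == 0) f y =
  \sum_(d | d ^+ 2 == b ^+ 2 - 4%:R * a * c) f ((d - b) / (2%:R * a)).
Proof.
move=> a0; have t0 := two_neq0 hodd; have f0 := four_neq0 hodd.
have ta0 : 2%:R * a != 0 by rewrite mulf_neq0.
rewrite (reindex (fun d => (d - b) / (2%:R * a))) /=; last first.
  exists (fun y => 2%:R * a * y + b) => x _ /=.
    by rewrite mulrCA mulfV // mulr1 subrK.
  by rewrite addrK mulrC mulKf.
apply: eq_bigl => d.
have -> : a * ((d - b) / (2%:R * a)) ^+ 2 + b * ((d - b) / (2%:R * a)) + c
   = (d ^+ 2 - (b ^+ 2 - 4%:R * a * c)) / (4%:R * a) by field; rewrite f0 a0 t0.
by rewrite mulf_eq0 invr_eq0 mulf_eq0 (negPf f0) (negPf a0) !orbF subr_eq0.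
Qed.

End SquareRoots.

Section QuadraticCharacterSums.

Variable F : finFieldType.
Hypothesis hodd : odd #|F|.

Lemma count_sqrt (D : F) : \sum_(d | d ^+ 2 == D) (1 : algC) = 1 + qchar F D.
Proof.
case: (squareP D) => [-> | e e0 -> | hD].
- by rewrite sum_sqrt0 qchar0 addr0.
- by rewrite sum_sqrt_sqr // qcharX2.
- by rewrite sum_sqrt_nonsquare // qchar_nonsquare // subrr.
Qed.

Lemma qchar_eq_of_mulr_sqr (x y s : F) :
  x * y = s ^+ 2 -> s != 0 -> qchar F x = qchar F y.
Proof.
move=> xy s0; have x0 : x != 0.
  by apply: contra_eq_neq xy => ->; rewrite mul0r eq_sym sqrf_eq0.
have xy1 : qchar F x * qchar F y = 1 by rewrite -qcharM // xy qcharX2.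
by rewrite -[qchar F y]mul1r -(qchar_sqr hodd x0) expr2 -mulrA xy1 mulr1.
Qed.

Lemma qchar_addr_eq0 (a b : F) : qchar F (a * b) = -1 -> qchar F a + qchar F b = 0.
Proof.
rewrite qcharM // => hab; have a0 : a != 0.
  by apply: contra_eq_neq hab => ->; rewrite qchar0 mul0r eq_sym oppr_eq0 oner_eq0.
by rewrite -[qchar F b]mul1r -(qchar_sqr hodd a0) expr2 -mulrA hab mulrN1 subrr.
Qed.

(* (u + v e) (u + m) / 2 = ((u + m + v e) / 2)^2 when m^2 = u^2 - v^2 e^2. *)
Lemma qchar_addr_root (u v e m : F) :
  m ^+ 2 = u ^+ 2 - v ^+ 2 * e ^+ 2 -> m != 0 -> v != 0 -> e != 0 ->
  qchar F (u + v * e) = qchar F ((u + m) / 2%:R).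
Proof.
move=> hm m0 v0 e0; have t0 := two_neq0 hodd.
have s0 : u + m + v * e != 0.
  apply: contra_neq m0 => s0.
  have m_eq : m = - (u + v * e) by apply/eqP; rewrite -addr_eq0 -s0; apply/eqP; ring.
  have : 2%:R * v * e * (u + v * e) = 0.
    have -> : 2%:R * v * e * (u + v * e) =
      (- (u + v * e)) ^+ 2 - (u ^+ 2 - v ^+ 2 * e ^+ 2) by ring.
    by rewrite -m_eq hm subrr.
  move/eqP; rewrite !mulf_eq0 (negPf t0) (negPf v0) (negPf e0) /= => /eqP uve0.
  by rewrite m_eq uve0 oppr0.
apply: (qchar_eq_of_mulr_sqr (s := (u + m + v * e) / 2%:R)); last first.
  by rewrite mulf_neq0 ?invr_eq0.
apply/eqP; rewrite -subr_eq0; apply/eqP.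
have -> : (u + v * e) * ((u + m) / 2%:R) - ((u + m + v * e) / 2%:R) ^+ 2
   = (u ^+ 2 - v ^+ 2 * e ^+ 2 - m ^+ 2) / 4%:R by field; rewrite four_neq0.
by rewrite hm subrr mul0r.
Qed.

Lemma sum_qchar_sqrt_square (u v D m : F) :
  v != 0 -> m != 0 -> u ^+ 2 - v ^+ 2 * D = m ^+ 2 ->
  \sum_(d | d ^+ 2 == D) qchar F (u + v * d) =
    qchar F ((u + m) / 2%:R) + qchar F ((u - m) / 2%:R).
Proof.
move=> v0 m0 hD; have t0 := two_neq0 hodd.
case: (squareP D) hD => [-> | e e0 -> | hD] hD'.
- have half_double (w : F) : (w + w) / 2%:R = w by field.
  rewrite sum_sqrt0 mulr0 addr0.
  move/eqP: hD'; rewrite mulr0 subr0 eq_sym eqf_sqr => /orP[] /eqP ->.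
    by rewrite subrr mul0r qchar0 addr0 half_double.
  by rewrite addrN mul0r qchar0 add0r opprK half_double.
- rewrite sum_sqrt_sqr // (qchar_addr_root (m := m)) //.
  by rewrite (qchar_addr_root (m := - m)) ?oppr_eq0 ?sqrrN.
- rewrite sum_sqrt_nonsquare //; apply/esym/qchar_addr_eq0.
  have -> : (u + m) / 2%:R * ((u - m) / 2%:R) = (v / 2%:R) ^+ 2 * D.
    apply/eqP; rewrite -subr_eq0; apply/eqP.
    have -> : (u + m) / 2%:R * ((u - m) / 2%:R) - (v / 2%:R) ^+ 2 * D =
      (u ^+ 2 - v ^+ 2 * D - m ^+ 2) / 4%:R by field; rewrite four_neq0.
    by rewrite hD' subrr mul0r.
  by rewrite qcharX2M ?mulf_neq0 ?invr_eq0 ?qchar_nonsquare.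
Qed.

Lemma sum_qchar_sqrt_nonsquare (u v D : F) :
  qchar F (u ^+ 2 - v ^+ 2 * D) = -1 ->
  \sum_(d | d ^+ 2 == D) qchar F (u + v * d) = 0.
Proof.
case: (squareP D) => [-> | e e0 -> | hD] hnsq.
- move: hnsq; rewrite mulr0 subr0.
  have [-> | u0] := eqVneq u 0.
    by rewrite expr0n qchar0 => /eqP; rewrite eq_sym oppr_eq0 oner_eq0.
  by rewrite qcharX2 // => /eqP; rewrite -subr_eq0 opprK -(natrD _ 1 1) pnatr_eq0.
- rewrite sum_sqrt_sqr //; apply: qchar_addr_eq0.
  by rewrite -hnsq; congr (qchar F _); ring.
- by rewrite sum_sqrt_nonsquare.
Qed.

End QuadraticCharacterSums.

Section JacobiSum.

Variables (F : finFieldType) (chi psi : F -> algC).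
Hypotheses (hchi : is_mchar chi) (hpsi : is_mchar psi).
Hypotheses (sum_chi : \sum_x chi x = 0) (sum_psi : \sum_x psi x = 0).
Hypothesis sum_chi_psi : \sum_x chi x * psi x = 0.

(* y |-> (1 - a y) / (1 - y), completed at its pole y = 1 by the value a it
   misses, is a permutation of F when a != 1. *)
Definition mobius (a y : F) : F := if y == 1 then a else (1 - a * y) / (1 - y).
Definition mobius_inv (a y : F) : F := if y == a then 1 else (y - 1) / (y - a).

Lemma mobiusK a : a != 1 -> cancel (mobius a) (mobius_inv a).
Proof.
move=> a1 y; rewrite /mobius /mobius_inv.
have [-> | y1] := eqVneq y 1; first by rewrite eqxx.
have y1' : 1 - y != 0 by rewrite subr_eq0 eq_sym.
have a1' : 1 - a != 0 by rewrite subr_eq0 eq_sym.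
have diff_a : (1 - a * y) / (1 - y) - a = (1 - a) / (1 - y) by field.
have diff_1 : (1 - a * y) / (1 - y) - 1 = y * (1 - a) / (1 - y) by field.
rewrite -subr_eq0 diff_a mulf_eq0 invr_eq0 (negPf a1') (negPf y1') /= diff_1.
by field; rewrite a1' y1'.
Qed.

Lemma sum_mchar_mobius a : a != 1 ->
  \sum_(y | y != 0) psi ((1 - a * y) / (1 - y)) = - 1 - psi a.
Proof.
move=> a1.
have sum_mobius : \sum_y psi (mobius a y) = 0.
  by rewrite -[RHS]sum_psi [RHS](reindex_inj (can_inj (mobiusK a1))).
have split_one : \sum_y psi (mobius a y) = psi a + \sum_y psi ((1 - a * y) / (1 - y)).
  rewrite (bigD1 1) // [in RHS](bigD1 1) //= subrr invr0 mulr0 (mchar0 hpsi) add0r.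
  rewrite {1}/mobius eqxx; congr (_ + _).
  by apply: eq_bigr => y /negPf y1; rewrite /mobius y1.
move: split_one; rewrite sum_mobius (bigD1 0) //= mulr0 subr0 invr1 mulr1 (mchar1 hpsi).
set T := \sum_(y | y != 0) _ => h.
by apply/eqP; rewrite -subr_eq0; apply/eqP; rewrite [RHS]h; ring.
Qed.

Let J := \sum_x chi x * psi (1 - x).

Lemma jacobi_mul_term y : y != 0 ->
  J * (chi y^-1 * psi (1 - y)^-1) = \sum_a chi a * psi ((1 - a * y) / (1 - y)).
Proof.
move=> y0; rewrite /J mulr_suml (reindex_inj (mulIf y0)) /=.
by apply: eq_bigr => a _; rewrite mulrACA -(mcharM hchi) -(mcharM hpsi) mulfK.
Qed.

Lemma sum_mobius_at1 : \sum_(y | y != 0) psi ((1 - 1 * y) / (1 - y)) = #|F|%:R - 2%:R.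
Proof.
have at1 y : psi ((1 - 1 * y) / (1 - y)) = (y != 1)%:R.
  rewrite mul1r; have [-> | y1] := eqVneq y 1; first by rewrite subrr invr0 mulr0 (mchar0 hpsi).
  by rewrite mulfV ?(mchar1 hpsi) // subr_eq0 eq_sym.
under eq_bigr do rewrite at1.
rewrite sumr_predC1 (bigD1 1) //= eqxx add0r (eq_bigr (fun _ => 1)) => [|y /negPf -> //].
by rewrite sumr_predC1 sumr_const (@eq_card _ _ F) // eq_sym oner_neq0 /=; ring.
Qed.

Let K := \sum_y chi y^-1 * psi (1 - y)^-1.

Lemma jacobi_mul_conj : J * K = #|F|%:R.
Proof.
rewrite /K mulr_sumr (bigD1 0) //= invr0 (mchar0 hchi) mul0r mulr0 add0r.
under eq_bigr => y y0 do rewrite jacobi_mul_term //.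
rewrite exchange_big /=; under eq_bigr do rewrite -mulr_sumr.
rewrite (bigD1 1) //= (mchar1 hchi) mul1r sum_mobius_at1.
rewrite (eq_bigr (fun a => - chi a - chi a * psi a)) => [|a a1]; last first.
  by rewrite sum_mchar_mobius // mulrBr mulrN1.
rewrite sumr_predC1 big_split /= !sumrN sum_chi sum_chi_psi (mchar1 hchi) (mchar1 hpsi).
ring.
Qed.

Lemma jacobi_neq0 : J != 0.
Proof.
apply: contra_eq_neq jacobi_mul_conj => ->.
by rewrite mul0r eq_sym pnatr_eq0 -lt0n (ltnW (finNzRing_gt1 F)).
Qed.

End JacobiSum.

Section Fibres.

Variable F : finFieldType.
Hypothesis hodd : odd #|F|.

Lemma divf_eq (x y D : F) : x != 0 -> (y / D == x) = (D != 0) && (x * D == y).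
Proof.
move=> x0; have [-> | D0] := eqVneq D 0; first by rewrite invr0 mulr0 eq_sym (negPf x0).
by apply/eqP/eqP => [<- | <-]; rewrite ?divfK ?mulfK.
Qed.

Lemma qchar_half (w : F) : qchar F (w / 2%:R) = qchar F 2%:R * qchar F w.
Proof. by rewrite (qcharM hodd) (qcharV hodd) mulrC. Qed.

Lemma qchar2_mul_half (w : F) : qchar F 2%:R * qchar F (w / 2%:R) = qchar F w.
Proof. by rewrite qchar_half mulrA -expr2 (qchar_sqr hodd) ?mul1r ?two_neq0. Qed.

Lemma mobius_fiberE (w x : F) : w != 0 -> (x / (1 - x) == w) = (x * (1 + w) == w).
Proof.
move=> w0; rewrite divf_eq // -[w * _ == x]subr_eq0 -[RHS]subr_eq0.
have -> : x * (1 + w) - w = - (w * (1 - x) - x) by ring.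
rewrite oppr_eq0 andb_idl // => /eqP h; apply/eqP => x1.
move: h; rewrite x1 mulr0 sub0r => /eqP; rewrite oppr_eq0 => /eqP x0.
by move: x1; rewrite x0 subr0 => /eqP; rewrite oner_eq0.
Qed.

Lemma sum_qchar_fiber_mobius (w : F) : w != 0 ->
  \sum_(x | x / (1 - x) == w) qchar F x = qchar F w * qchar F (1 + w).
Proof.
move=> w0; under eq_bigl do rewrite mobius_fiberE //.
have [w1 | w1] := eqVneq (1 + w) 0.
  by rewrite w1 qchar0 mulr0 big_pred0 // => x; rewrite mulr0 eq_sym (negPf w0).
rewrite (big_pred1 (w / (1 + w))) ?(qcharM hodd) ?(qcharV hodd) // => x.
by rewrite (can2_eq (mulfK w1) (divfK w1)).
Qed.

Lemma sum_qchar_fiber_parabola (w : F) :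
  \sum_(x | x * (1 - x) == w) qchar F (x * (1 - x)) = qchar F w * (1 + qchar F (1 - 4%:R * w)).
Proof.
rewrite (eq_bigr (fun _ => qchar F w * 1)) => [|x /eqP ->]; last by rewrite mulr1.
rewrite -mulr_sumr (eq_bigl (fun x => 1 * x ^+ 2 + (-1) * x + w == 0)) => [|x].
  rewrite sum_quadratic_roots ?oner_eq0 // count_sqrt //.
  by congr (_ * (1 + qchar F _)); ring.
have -> : 1 * x ^+ 2 + (-1) * x + w = - (x * (1 - x) - w) by ring.
by rewrite oppr_eq0 subr_eq0.
Qed.

Lemma fiber1_quadraticE (z x y : F) : x != 0 ->
  (y / (1 - y) / (1 - z * y) == x) =
  (x * z * y ^+ 2 + (- (x * (1 + z) + 1)) * y + x == 0).
Proof.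
move=> x0; rewrite -mulrA -invfM divf_eq //.
have -> : x * z * y ^+ 2 + (- (x * (1 + z) + 1)) * y + x =
  x * ((1 - y) * (1 - z * y)) - y by ring.
rewrite subr_eq0 andb_idl // => /eqP xD; apply/eqP => D0.
move: xD; rewrite D0 mulr0 => y0.
by move: D0; rewrite -y0 !(mulr0, subr0, mulr1) => /eqP; rewrite oner_eq0.
Qed.

Lemma sum_qchar_fiber1 (z x : F) : z != 0 -> x != 0 ->
  \sum_(y | y / (1 - y) / (1 - z * y) == x) qchar F y =
  qchar F (x * z) * (qchar F 2%:R *
    \sum_(d | d ^+ 2 == (x * (1 + z) + 1) ^+ 2 - 4%:R * (x * z) * x)
      qchar F (x * (1 + z) + 1 + 1 * d)).
Proof.
move=> z0 x0; under eq_bigl do rewrite fiber1_quadraticE //.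
rewrite sum_quadratic_roots ?mulf_neq0 // [RHS]mulrA [qchar F (x * z) * _]mulrC.
rewrite -(qcharM hodd) mulr_sumr.
apply: eq_big => [d | d _]; first by rewrite sqrrN.
by rewrite [LHS](qcharM hodd) (qcharV hodd) mulrC; congr (_ * qchar F _); ring.
Qed.

Lemma sum_qchar_fiber1_nonsquare (z x : F) : z != 0 -> x != 0 ->
  (forall s, s ^+ 2 != z) ->
  \sum_(y | y / (1 - y) / (1 - z * y) == x) qchar F y = 0.
Proof.
move=> z0 x0 z_nsq; rewrite sum_qchar_fiber1 //.
rewrite (sum_qchar_sqrt_nonsquare hodd) ?mulr0 //.
have -> : (x * (1 + z) + 1) ^+ 2 - 1 ^+ 2 *
   ((x * (1 + z) + 1) ^+ 2 - 4%:R * (x * z) * x) = (2%:R * x) ^+ 2 * z by ring.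
by rewrite qcharX2M ?mulf_neq0 ?two_neq0 ?qchar_nonsquare.
Qed.

Lemma sum_qchar_fiber1_square (s x : F) : s != 0 -> x != 0 ->
  \sum_(y | y / (1 - y) / (1 - s ^+ 2 * y) == x) qchar F y =
  qchar F x * (qchar F (1 + (1 + s) ^+ 2 * x) + qchar F (1 + (1 - s) ^+ 2 * x)).
Proof.
move=> s0 x0; rewrite sum_qchar_fiber1 ?expf_neq0 //.
rewrite (sum_qchar_sqrt_square hodd (m := 2%:R * x * s)) ?oner_eq0 ?mulf_neq0 ?two_neq0 //;
  last by ring.
rewrite [x * s ^+ 2]mulrC (qcharX2M hodd) // mulrDr !qchar2_mul_half.
by congr (_ * (qchar F _ + qchar F _)); ring.
Qed.

Lemma fiber2_quadraticE (z x : F) : x != 0 ->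
  \sum_(y | y * (1 - y) / (1 - z * y) == x) qchar F (y * (1 - y)) =
  qchar F x * \sum_(y | 1 * y ^+ 2 + (- (1 + x * z)) * y + x == 0) qchar F (1 - z * y).
Proof.
move=> x0; rewrite mulr_sumr big_mkcond [RHS]big_mkcond; apply: eq_bigr => y _ /=.
have -> : 1 * y ^+ 2 + (- (1 + x * z)) * y + x = x * (1 - z * y) - y * (1 - y) by ring.
rewrite divf_eq //; have [-> | D0] := eqVneq (1 - z * y) 0.
  by rewrite qchar0 !mulr0 /=; case: ifP.
by rewrite /= subr_eq0; case: eqP => [<- | _]; rewrite ?(qcharM hodd).
Qed.

Lemma sum_qchar_fiber2 (z x : F) : x != 0 ->
  \sum_(y | y * (1 - y) / (1 - z * y) == x) qchar F (y * (1 - y)) =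
  qchar F x * (qchar F 2%:R *
    \sum_(d | d ^+ 2 == (1 + x * z) ^+ 2 - 4%:R * 1 * x)
      qchar F (2%:R - z - x * z ^+ 2 + (- z) * d)).
Proof.
move=> x0; have t0 := two_neq0 hodd.
rewrite fiber2_quadraticE // sum_quadratic_roots ?oner_eq0 //; congr (_ * _).
rewrite mulr_sumr.
apply: eq_big => [d | d _]; first by rewrite sqrrN.
rewrite -qchar_half; congr (qchar F _); field; exact: t0.
Qed.

Lemma sum_qchar_fiber2_nonsquare (z x : F) : x != 0 -> (forall t, t ^+ 2 != 1 - z) ->
  \sum_(y | y * (1 - y) / (1 - z * y) == x) qchar F (y * (1 - y)) = 0.
Proof.
move=> x0 z_nsq; rewrite sum_qchar_fiber2 //.
rewrite (sum_qchar_sqrt_nonsquare hodd) ?mulr0 //.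
have -> : (2%:R - z - x * z ^+ 2) ^+ 2 - (- z) ^+ 2 *
   ((1 + x * z) ^+ 2 - 4%:R * 1 * x) = 2%:R ^+ 2 * (1 - z) by ring.
by rewrite qcharX2M ?two_neq0 ?qchar_nonsquare.
Qed.

Lemma sum_qchar_fiber2_square (t x : F) : t != 0 -> 1 - t ^+ 2 != 0 -> x != 0 ->
  \sum_(y | y * (1 - y) / (1 - (1 - t ^+ 2) * y) == x) qchar F (y * (1 - y)) =
  qchar F x * (qchar F (1 - (1 + t) ^+ 2 * x) + qchar F (1 - (1 - t) ^+ 2 * x)).
Proof.
move=> t0 z0 x0; have t20 := two_neq0 hodd.
have : (1 + t) * (1 - t) != 0 by apply: contra_neq z0 => <-; ring.
rewrite mulf_eq0 negb_or => /andP[p0 m0].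
rewrite sum_qchar_fiber2 //.
rewrite (sum_qchar_sqrt_square hodd (m := 2%:R * t)) ?oppr_eq0 ?mulf_neq0 //; last by ring.
rewrite mulrDr !qchar2_mul_half addrC; congr (_ * (_ + _)).
  by rewrite -[RHS](qcharX2M hodd _ m0); congr (qchar F _); ring.
by rewrite -[RHS](qcharX2M hodd _ p0); congr (qchar F _); ring.
Qed.

Lemma sum_qchar_fiber2_one (x : F) : x != 0 ->
  \sum_(y | y * (1 - y) / (1 - 1 * y) == x) qchar F (y * (1 - y)) =
  qchar F x * qchar F (1 - x).
Proof.
move=> x0; rewrite sum_qchar_fiber2 //; congr (_ * _).
rewrite (eq_bigl (fun d => d ^+ 2 == (1 - x) ^+ 2)) => [|d]; last by congr (_ == _); ring.
have [-> | x1] := eqVneq x 1.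
  rewrite subrr expr0n /= sum_sqrt0 qchar0.
  have -> : 2%:R - 1 - 1 * 1 ^+ 2 + -1 * 0 = 0 :> F by ring.
  by rewrite qchar0 mulr0.
rewrite sum_sqrt_sqr ?subr_eq0 1?eq_sym //.
have -> : 2%:R - 1 - x * 1 ^+ 2 + - 1 * (1 - x) = 0 by ring.
have -> : 2%:R - 1 - x * 1 ^+ 2 + - 1 * - (1 - x) = 2%:R * (1 - x) by ring.
by rewrite qchar0 add0r (qcharM hodd) mulrA -expr2 (qchar_sqr hodd) ?two_neq0 ?mul1r.
Qed.

End Fibres.

Section CharacterOfOrderAtLeastThree.

Variable F : finFieldType.
Hypothesis hodd : odd #|F|.
Variable A : F -> algC.
Hypothesis hA : is_mchar A.
Hypothesis hA2 : cexp A 2 <> eps F.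

Let hAphi : is_mchar (cmul A (qchar F)) := mchar_mul hA (qchar_mchar hodd).

Lemma mchar_sqr_nontrivial : exists2 a, a != 0 & A a ^+ 2 != 1.
Proof.
have [a /andP[a0 Aa2] | no_a] := pickP (fun a => (a != 0) && (A a ^+ 2 != 1)).
  by exists a.
case: hA2; apply: functional_extensionality => x; rewrite /cexp /eps.
have [-> | x0] := eqVneq x 0; first by rewrite (mchar0 hA) expr0n.
by have := no_a x; rewrite x0 /= => /negbFE/eqP.
Qed.

Lemma sum_Aphi : \sum_x cmul A (qchar F) x = 0.
Proof.
have [a a0 Aa2] := mchar_sqr_nontrivial.
apply: (mchar_sum_eq0 hAphi a0); apply: contra Aa2; rewrite /cmul => /eqP Aphi_a.
by apply/eqP; rewrite -(mulr1 (A a ^+ 2)) -{1}(qchar_sqr hodd a0) -exprMn Aphi_a expr1n.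
Qed.

Lemma sum_A_inv : \sum_x A x^-1 = 0.
Proof.
have [a a0 Aa2] := mchar_sqr_nontrivial.
apply: (mchar_sum_eq0 (mchar_invarg hA) (_ : a^-1 != 0)); rewrite ?invr_eq0 // invrK.
by apply: contra Aa2 => /eqP ->; rewrite expr1n.
Qed.

Lemma sum_qchar : \sum_x qchar F x = 0.
Proof.
have [w hw] := primitive_root_exists F.
apply: (mchar_sum_eq0 (qchar_mchar hodd) (prim_root_neq0 hw)).
by rewrite -[w]expr1 (qchar_prim_expr hodd hw) expr1 -subr_eq0 -opprD oppr_eq0 -mulr2n pnatr_eq0.
Qed.

Lemma cexp_conj2 u : cexp (cconj A) 2 u = A (u ^+ 2)^-1.
Proof. by rewrite /cexp /cconj (conj_mchar hA) -(mcharX hA) exprVn. Qed.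

Lemma conj_Aphi_mul_phi u : cmul (cconj (cmul A (qchar F))) (qchar F) u = A u^-1.
Proof.
rewrite /cmul /cconj rmorphM /= (conj_mchar hA) conj_qchar -mulrA -expr2.
have [-> | u0] := eqVneq u 0; first by rewrite invr0 (mchar0 hA) mul0r.
by rewrite qchar_sqr // mulr1.
Qed.

Lemma conj_Aphi_mul_A2 u : cmul (cconj (cmul A (qchar F))) (cexp A 2) u = cmul A (qchar F) u.
Proof.
rewrite /cmul /cconj /cexp rmorphM /= (conj_mchar hA) conj_qchar (mcharV hA).
have [-> | u0] := eqVneq u 0; first by rewrite qchar0 !(mulr0, mul0r).
by have := mchar_neq0 hA u0; rewrite expr2 => A0; field.
Qed.

Lemma jacobi_phiE :
  jacobi (cmul A (qchar F)) (cmul (qchar F) (cconj (cmul A (qchar F)))) =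
  \sum_x qchar F x * A (x / (1 - x)).
Proof.
apply: eq_bigr => x _.
by rewrite [cmul (qchar F) _ _]cmulC conj_Aphi_mul_phi /cmul (mcharM hA); ring.
Qed.

Lemma jacobi_phi_neq0 :
  jacobi (cmul A (qchar F)) (cmul (qchar F) (cconj (cmul A (qchar F)))) != 0.
Proof.
rewrite /jacobi; under eq_bigr do rewrite [cmul (qchar F) _ _]cmulC conj_Aphi_mul_phi.
apply: (jacobi_neq0 hAphi (mchar_invarg hA) sum_Aphi sum_A_inv).
rewrite -[RHS]sum_qchar; apply: eq_bigr => x _.
have [-> | x0] := eqVneq x 0; first by rewrite qchar0 /cmul !(mchar0 hA, mul0r).
by rewrite /cmul mulrAC (mchar_mulV hA x0) mul1r.
Qed.

Lemma jacobi_A2E :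
  jacobi (cmul A (qchar F)) (cmul (cexp A 2) (cconj (cmul A (qchar F)))) =
  \sum_x qchar F (x * (1 - x)) * A (x * (1 - x)).
Proof.
apply: eq_bigr => x _.
by rewrite [cmul (cexp A 2) _ _]cmulC conj_Aphi_mul_A2 /cmul (mcharM hA) qcharM //; ring.
Qed.

Lemma jacobi_A2_neq0 :
  jacobi (cmul A (qchar F)) (cmul (cexp A 2) (cconj (cmul A (qchar F)))) != 0.
Proof.
rewrite /jacobi; under eq_bigr do rewrite [cmul (cexp A 2) _ _]cmulC conj_Aphi_mul_A2.
apply: (jacobi_neq0 hAphi hAphi sum_Aphi sum_Aphi).
have [a a0 Aa2] := mchar_sqr_nontrivial.
apply: (mchar_sum_eq0 (mchar_mul hAphi hAphi) a0); apply: contra Aa2 => /eqP <-.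
by rewrite /cmul -expr2 exprMn qchar_sqr // mulr1.
Qed.

Lemma mulr_sum_mcharV (g : F -> algC) (h : F -> F) (c : F) : c != 0 ->
  (\sum_x g x * A (h x)) * A c^-1 = \sum_w A w * \sum_(x | h x == c * w) g x.
Proof.
move=> c0; rewrite mulr_suml.
under eq_bigr do rewrite -mulrA -(mcharM hA).
rewrite sum_fiber; apply: eq_bigr => w _; congr (_ * _).
by apply: eq_bigl => x; rewrite (can2_eq (divfK c0) (mulfK c0)) [w * c]mulrC.
Qed.

Lemma jacobi_phi_mulA (k : F) :
  (\sum_x qchar F x * A (x / (1 - x))) * A (k ^+ 2)^-1 =
  \sum_w A w * (qchar F w * qchar F (1 + k ^+ 2 * w)).
Proof.
have [-> | k0] := eqVneq k 0.
  rewrite expr0n /= invr0 (mchar0 hA) mulr0 -[LHS]sum_Aphi.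
  by apply: eq_bigr => w _; rewrite mul0r addr0 qchar1 mulr1.
rewrite mulr_sum_mcharV ?expf_neq0 //; apply: eq_bigr => w _.
have [-> | w0] := eqVneq w 0; first by rewrite (mchar0 hA) !mul0r.
by rewrite (sum_qchar_fiber_mobius hodd) ?mulf_neq0 ?expf_neq0 // (qcharX2M hodd).
Qed.

Lemma jacobi_A2_mulA (k : F) : k != 0 ->
  (\sum_x qchar F (x * (1 - x)) * A (x * (1 - x))) * A (k ^+ 2)^-1 =
  \sum_w A w * (qchar F w * qchar F (1 - 4%:R * k ^+ 2 * w)).
Proof.
move=> k0; rewrite mulr_sum_mcharV ?expf_neq0 //.
rewrite (eq_bigr (fun w => cmul A (qchar F) w +
  A w * (qchar F w * qchar F (1 - 4%:R * k ^+ 2 * w)))) => [|w _].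
  by rewrite big_split /= sum_Aphi add0r.
rewrite (sum_qchar_fiber_parabola hodd) (qcharX2M hodd) // [4%:R * (_ * _)]mulrA /cmul.
by ring.
Qed.

Lemma P21_phi_fiber z :
  P21 A (cmul A (qchar F)) (qchar F) z =
  \sum_x A x * \sum_(y | y / (1 - y) / (1 - z * y) == x) qchar F y.
Proof.
rewrite /P21 -sum_fiber; apply: eq_bigr => y _.
by rewrite conj_Aphi_mul_phi /cconj (conj_mchar hA) /cmul !(mcharM hA); ring.
Qed.

Lemma P21_A2_fiber z :
  P21 A (cmul A (qchar F)) (cexp A 2) z =
  \sum_x A x * \sum_(y | y * (1 - y) / (1 - z * y) == x) qchar F (y * (1 - y)).
Proof.
rewrite /P21 -(sum_fiber (fun y => qchar F (y * (1 - y)))); apply: eq_bigr => y _.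
by rewrite conj_Aphi_mul_A2 /cconj (conj_mchar hA) /cmul !(mcharM hA) (qcharM hodd); ring.
Qed.

Lemma P21_phi_nonsquare z : z != 0 -> (forall s, s ^+ 2 != z) ->
  P21 A (cmul A (qchar F)) (qchar F) z = 0.
Proof.
move=> z0 z_nsq; rewrite P21_phi_fiber big1 // => x _.
have [-> | x0] := eqVneq x 0; first by rewrite (mchar0 hA) mul0r.
by rewrite (sum_qchar_fiber1_nonsquare hodd) ?mulr0.
Qed.

Lemma P21_phi_square s : s != 0 ->
  P21 A (cmul A (qchar F)) (qchar F) (s ^+ 2) =
  jacobi (cmul A (qchar F)) (cmul (qchar F) (cconj (cmul A (qchar F)))) *
    (A ((1 + s) ^+ 2)^-1 + A ((1 - s) ^+ 2)^-1).
Proof.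
move=> s0; rewrite P21_phi_fiber jacobi_phiE mulrDr !jacobi_phi_mulA -big_split /=.
apply: eq_bigr => x _; have [-> | x0] := eqVneq x 0; first by rewrite (mchar0 hA) !mul0r addr0.
by rewrite (sum_qchar_fiber1_square hodd) //; ring.
Qed.

Lemma P21_A2_nonsquare z : (forall t, t ^+ 2 != 1 - z) ->
  P21 A (cmul A (qchar F)) (cexp A 2) z = 0.
Proof.
move=> z_nsq; rewrite P21_A2_fiber big1 // => x _.
have [-> | x0] := eqVneq x 0; first by rewrite (mchar0 hA) mul0r.
by rewrite (sum_qchar_fiber2_nonsquare hodd) ?mulr0.
Qed.

Lemma P21_A2_one :
  P21 A (cmul A (qchar F)) (cexp A 2) 1 =
  jacobi (cmul A (qchar F)) (cmul (cexp A 2) (cconj (cmul A (qchar F)))) *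
    A ((1 / 2%:R) ^+ 2)^-1.
Proof.
have t0 := two_neq0 hodd.
rewrite P21_A2_fiber jacobi_A2E jacobi_A2_mulA ?mulf_neq0 ?oner_eq0 ?invr_eq0 //.
apply: eq_bigr => x _; have [-> | x0] := eqVneq x 0; first by rewrite (mchar0 hA) !mul0r.
by rewrite (sum_qchar_fiber2_one hodd) //; congr (_ * (_ * qchar F _)); field.
Qed.

Lemma P21_A2_square t : t != 0 -> 1 - t ^+ 2 != 0 ->
  P21 A (cmul A (qchar F)) (cexp A 2) (1 - t ^+ 2) =
  jacobi (cmul A (qchar F)) (cmul (cexp A 2) (cconj (cmul A (qchar F)))) *
    (A (((1 + t) / 2%:R) ^+ 2)^-1 + A (((1 - t) / 2%:R) ^+ 2)^-1).
Proof.
move=> t0 z0; have t20 := two_neq0 hodd.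
have : (1 + t) * (1 - t) != 0 by apply: contra_neq z0 => <-; ring.
rewrite mulf_eq0 negb_or => /andP[p0 m0].
rewrite P21_A2_fiber jacobi_A2E mulrDr !jacobi_A2_mulA ?mulf_neq0 ?invr_eq0 // -big_split /=.
apply: eq_bigr => x _; have [-> | x0] := eqVneq x 0; first by rewrite (mchar0 hA) !mul0r addr0.
rewrite (sum_qchar_fiber2_square hodd) // -!mulrDr.
by congr (_ * (_ * (qchar F _ + qchar F _))); field.
Qed.

Lemma F21_Aphi_phi z : z != 0 ->
  F21 A (cmul A (qchar F)) (qchar F) z =
    (1 + qchar F z) / 2 *
      (cexp (cconj A) 2 (1 + sqrtF z) + cexp (cconj A) 2 (1 - sqrtF z)).
Proof.
move=> z0; rewrite /F21.
have [z_nsq | ] := sqrtF_cases z.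
  by rewrite P21_phi_nonsquare // qchar_nonsquare // subrr !mul0r.
move: (sqrtF z) => s sz; have s0 : s != 0 by apply: contra_neq z0 => s0; rewrite -sz s0 expr0n.
rewrite -sz P21_phi_square // (qcharX2 hodd) // !cexp_conj2 mulrC mulKf ?jacobi_phi_neq0 //.
by field.
Qed.

Lemma F21_Aphi_A2 z : z != 0 ->
  F21 A (cmul A (qchar F)) (cexp A 2) z =
    (1 + qchar F (1 - z)) / 2 *
      (cexp (cconj A) 2 ((1 + sqrtF (1 - z)) / 2%:R)
       + cexp (cconj A) 2 ((1 - sqrtF (1 - z)) / 2%:R)).
Proof.
move=> z0; rewrite /F21.
have [z_nsq | ] := sqrtF_cases (1 - z).
  by rewrite P21_A2_nonsquare // qchar_nonsquare // subrr !mul0r.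
move: (sqrtF (1 - z)) => t tz; have {tz}ez : z = 1 - t ^+ 2 by rewrite tz; ring.
rewrite {}ez in z0 *.
rewrite !cexp_conj2 (_ : 1 - (1 - t ^+ 2) = t ^+ 2); last by ring.
have [-> | t0] := eqVneq t 0.
  rewrite [0 ^+ 2]expr2 mul0r !subr0 qchar0 !addr0 P21_A2_one mulrC mulKf ?jacobi_A2_neq0 //.
  by field.
rewrite P21_A2_square // (qcharX2 hodd) // mulrC mulKf ?jacobi_A2_neq0 //.
by field.
Qed.

End CharacterOfOrderAtLeastThree.

Unset Implicit Arguments. Set Strict Implicit.

Theorem mainTheorem5 (F : finFieldType) (hodd : odd #|F|) (z : F) (hz : z != 0)
  (A : F -> algC) (hA : is_mchar A)
  (hord : cexp A 1 <> eps F /\ cexp A 2 <> eps F) :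
  F21 A (cmul A (qchar F)) (qchar F) z =
    (1 + qchar F z) / 2 *
      (cexp (cconj A) 2 (1 + sqrtF z) + cexp (cconj A) 2 (1 - sqrtF z))
  /\
  F21 A (cmul A (qchar F)) (cexp A 2) z =
    (1 + qchar F (1 - z)) / 2 *
      (cexp (cconj A) 2 ((1 + sqrtF (1 - z)) / 2%:R)
       + cexp (cconj A) 2 ((1 - sqrtF (1 - z)) / 2%:R)).
Proof.
have hA2 := proj2 hord.
by split; [exact: F21_Aphi_phi | exact: F21_Aphi_A2].
Qed.
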